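(* Let $q$ be a power of an odd prime with $q\equiv3\pmod4$, $d=4k+2$ with $k$ a positive integer, and $A\subset\mathbb F_q^d$. Let $N(A)$ be the number of pairs $(a,b)\in A^2$ with $\|a-b\|=0$. Then \[N(A)\ll\frac{|A|^2}{q}+q^{\frac{d-2}{2}}|A|.\]
   Context: $\|x\|=x_1^2+\cdots+x_d^2$. $X\ll Y$ means $X\le CY$ with $C$ absolute (independent of $q$ and $A$). *)

From HB Require Import structures.
From mathcomp Require Import all_boot all_order all_algebra all_field.
Set Implicit Arguments. Unset Strict Implicit. Unset Printing Implicit Defensive.
Import Order.TTheory GRing.Theory Num.Theory.
Local Open Scope ring_scope.

Definition sqnorm (F : finFieldType) (d : nat) (x : 'rV[F]_d) : F :=
  \sum_(i < d) x 0 i ^+ 2.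

Definition Niso (F : finFieldType) (d : nat) (A : {set 'rV[F]_d}) : nat :=
  #|[set p : 'rV[F]_d * 'rV[F]_d |
      [&& p.1 \in A, p.2 \in A & sqnorm (p.1 - p.2) == 0]]|.

From HB Require Import structures.
From mathcomp Require Import all_boot all_order all_algebra all_field.
From mathcomp Require Import ring.
Set Implicit Arguments. Unset Strict Implicit. Unset Printing Implicit Defensive.
Import Order.TTheory GRing.Theory Num.Theory.
Local Open Scope ring_scope.

(* Fourier analysis on F^d with a nontrivial additive character psi.  Let S(x)
   be the sum of psi(s.x) over the isotropic cone ||s|| = 0.  On the one hand
   the sum of S(a - b) over A^2 is the sum over the cone of |sum_a psi(s.a)|^2,
   hence nonnegative.  On the other hand, detecting ||s|| = 0 by a sum over r
   and completing squares expresses S through the Gauss sums G(r); as -1 is not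
   a square when q = 3 mod 4, G(r)^2 = -q, so for d = 2m with m odd
   q S(x) = q^d [x = 0] - q^m (q [||x|| = 0] - 1).  Summing this over A^2 gives
   0 <= q^m (q^m |A| + |A|^2 - q N(A)). *)

Lemma sum_fibres (T U : finType) (V : nmodType) (g : T -> U) (phi : U -> V) :
  \sum_x phi (g x) = \sum_u phi u *+ #|[set x | g x == u]|.
Proof.
rewrite (partition_big g predT) //=; apply: eq_bigr => u _.
rewrite (eq_bigr (fun _ => phi u)) => [|x /eqP -> //].
by rewrite sumr_const; congr (_ *+ _); apply: eq_card => x; rewrite inE.
Qed.

Lemma card_fibres (T U : finType) (g : T -> U) :
  (\sum_u #|[set x | g x == u]| = #|T|)%N.
Proof.
rewrite -sum1_card (partition_big g predT) //=; apply: eq_bigr => u _.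
by rewrite -sum1_card; apply: eq_bigl => x; rewrite inE.
Qed.

Lemma sum_row_prod (T : finType) (R : comPzSemiRingType) d (phi : 'I_d -> T -> R) :
  \sum_(s : 'rV[T]_d) \prod_i phi i (s 0 i) = \prod_i \sum_y phi i y.
Proof.
rewrite bigA_distr_bigA /= (reindex (fun f : {ffun 'I_d -> T} => \row_i f i)) /=.
  by apply: eq_bigr => f _; apply: eq_bigr => i _; rewrite mxE.
exists (fun s : 'rV_d => [ffun i => s 0 i]) => [f _|s _].
  by apply/ffunP => i; rewrite ffunE mxE.
by apply/rowP => i; rewrite !mxE ffunE.
Qed.

Lemma prod_row_eq0 (R : comPzSemiRingType) (V : nmodType) d (x : 'rV[V]_d) :
  \prod_i ((x 0 i == 0)%:R : R) = (x == 0)%:R.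
Proof.
have [->|x_neq0] := eqVneq x 0; first by rewrite big1 // => i _; rewrite mxE eqxx.
have [i xi_neq0] : exists i, x 0 i != 0.
  apply/existsP; apply: contraNT x_neq0; rewrite negb_exists => /forallP x0.
  by apply/eqP/rowP => i; rewrite mxE; apply/eqP/negPn.
by rewrite (bigD1 i) //= (negPf xi_neq0) mul0r.
Qed.

Definition dot (R : pzRingType) d (u v : 'rV[R]_d) : R := \sum_i u 0 i * v 0 i.

Lemma dotBr (R : pzRingType) d (u v w : 'rV[R]_d) : dot u (v - w) = dot u v - dot u w.
Proof. by rewrite /dot -sumrB; apply: eq_bigr => i _; rewrite !mxE mulrBr. Qed.

Lemma Niso_sum (R : pzSemiRingType) (F : finFieldType) d (A : {set 'rV[F]_d}) :
  (Niso A)%:R = \sum_(a in A) \sum_(b in A) (sqnorm (a - b) == 0)%:R :> R.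
Proof.
rewrite /Niso -sum1_card natr_sum pair_big_dep /= big_mkcond [RHS]big_mkcond.
apply: eq_bigr => -[a b] _; rewrite inE /= andbA.
by case: (a \in A); case: (b \in A); case: (sqnorm _ == 0).
Qed.

Lemma two_neq0_card_odd (F : finFieldType) : odd #|F| -> (2 : F) != 0.
Proof.
have [p p_pr charFp] := finPcharP F.
apply: contraTneq => two0.
have p2 : p = 2%N by apply/eqP; rewrite -dvdn_prime2 // (dvdn_pcharf charFp) two0.
have := card_pprimeChar charFp; move: (logn _ _) => n /= cardF.
rewrite cardF p2 oddX orbF; apply: contraTneq (card_finNzRing_gt1 F) => n0.
by rewrite cardF n0.
Qed.

Lemma nonsquareN1_card_mod4 (F : finFieldType) :
  (#|F| %% 4 = 3)%N -> forall i : F, i ^+ 2 != -1.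
Proof.
move=> q3 i; apply/eqP => i2N1.
have q_odd : odd #|F| by rewrite (divn_eq #|F| 4) q3 oddD oddM andbF.
have i4 : i ^+ 4 = 1 by rewrite (exprM i 2 2) i2N1 sqrrN expr1n.
have iN : i = - i.
  rewrite -[LHS]expf_card (divn_eq #|F| 4) q3 exprD mulnC exprM i4 expr1n mul1r.
  by rewrite exprSr i2N1 mulN1r.
have i0 : i = 0.
  apply/eqP; have : 2 * i == 0 by rewrite mulr_natl mulr2n {2}iN subrr.
  by rewrite mulf_eq0 (negbTE (two_neq0_card_odd q_odd)).
by move: i2N1; rewrite i0 expr0n /= => /eqP; rewrite eq_sym oppr_eq0 oner_eq0.
Qed.

Lemma exists_Fp_linear_form (F : finFieldType) :
  exists2 p, prime p &
    exists2 h : F -> 'F_p, {morph h : x y / x + y} & exists c, h c = 1.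
Proof.
have [p p_pr charFp] := finPcharP F; exists p => //.
have [f f_lin [g fK gK]] := pprimeChar_vectAxiom charFp.
have cardF := card_pprimeChar charFp.
move: (logn _ _) cardF f f_lin g fK gK => n cardF f f_lin g fK gK.
have n_gt0 : (0 < n)%N.
  by rewrite lt0n; apply: contraTneq (card_finNzRing_gt1 F) => n0; rewrite cardF n0.
have fD : {morph f : x y / x + y}.
  by move=> x y; rewrite -{1}[x]scale1r f_lin scale1r.
exists (fun x => f x 0 (Ordinal n_gt0)); first by move=> x y; rewrite fD mxE.
by exists (g (const_mx 1)); rewrite gK mxE.
Qed.

Lemma exists_add_char (F : finFieldType) : exists psi : F -> algC,
  [/\ {morph psi : x y / x + y >-> x * y}, psi 0 = 1,
      forall x, psi (- x) = (psi x)^* & exists c, psi c != 1].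
Proof.
have [p p_pr [h hD [c hc1]]] := exists_Fp_linear_form F.
have [w w_prim] := C_prim_root_exists (prime_gt0 p_pr).
have w_mod m : w ^+ (m %% (Zp_trunc (pdiv p)).+2) = w ^+ m.
  by rewrite Fp_cast // prim_expr_mod.
have psiD : {morph (fun x => w ^+ h x) : x y / x + y >-> x * y}.
  by move=> x y /=; rewrite hD w_mod exprD.
have h0 : h 0 = 0 by apply: (addrI (h 0)); rewrite -hD !addr0.
have w_norm : `|w| = 1.
  apply/eqP; rewrite -(pexpr_eq1 (prime_gt0 p_pr)) ?normr_ge0 //.
  by rewrite -normrX (prim_expr_order w_prim) normr1.
exists (fun x => w ^+ h x); split => //=; first by rewrite h0.
  move=> x; have wNx : w ^+ h (- x) * w ^+ h x = 1 by rewrite -psiD addNr h0.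
  have wx_norm : `|w ^+ h x| = 1 by rewrite normrX w_norm expr1n.
  by rewrite -[RHS]mul1r -wNx -mulrA -normCK wx_norm expr1n mulr1.
exists c; rewrite hc1 /= w_mod -[X in _ != X](expr0 w) (eq_prim_root_expr w_prim).
by rewrite mod0n modn_small ?prime_gt1.
Qed.

Section SquareRoots.
Variable F : finFieldType.

Definition nsqrt (t : F) := #|[set y : F | y ^+ 2 == t]|.

Lemma nsqrt_le2 t : (nsqrt t <= 2)%N.
Proof.
have [y0 /eqP y0t|no_root] := pickP [pred y : F | y ^+ 2 == t].
  apply: (@leq_trans #|[set y0; - y0]|); last by rewrite cards2 ltnS leq_b1.
  by apply/subset_leq_card/subsetP => y; rewrite !inE -y0t eqf_sqr.
by rewrite /nsqrt (eq_card (B := pred0)) ?card0 // => y; rewrite inE; exact: no_root.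
Qed.

Lemma nsqrt0 : nsqrt 0 = 1%N.
Proof.
by rewrite /nsqrt (eq_card (B := pred1 0)) ?card1 // => y; rewrite inE sqrf_eq0.
Qed.

Hypothesis nonsquareN1 : forall i : F, i ^+ 2 != -1.

(* Each of the q summands [nsqrt u + nsqrt (- u)] is at most 2 and they add up
   to 2q, so all of them equal 2. *)
Lemma nsqrtN_add t : (nsqrt t + nsqrt (- t) = 2)%N.
Proof.
have le2 u : (nsqrt u + nsqrt (- u) <= 2)%N.
  have [->|u_neq0] := eqVneq u 0; first by rewrite oppr0 nsqrt0.
  case: (posnP (nsqrt u)) => [->|]; first exact: nsqrt_le2.
  case: (posnP (nsqrt (- u))) => [->|]; first by rewrite addn0 nsqrt_le2.
  rewrite !card_gt0 => /set0Pn[y1]; rewrite inE => /eqP y1N /set0Pn[y2].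
  rewrite inE => /eqP y2u.
  have y2_neq0 : y2 != 0 by apply: contraNneq u_neq0 => y0; rewrite -y2u y0 expr0n.
  by have := nonsquareN1 (y1 / y2); rewrite expr_div_n y1N y2u mulNr divff ?eqxx.
have total : (\sum_u (nsqrt u + nsqrt (- u)) = \sum_(u : F) 2)%N.
  rewrite big_split /= /nsqrt card_fibres (reindex_inj (@oppr_inj F)) /=.
  under eq_bigr do rewrite opprK.
  by rewrite card_fibres sum_nat_const addnn muln2.
move/eqP: total; rewrite (@leqif_sum _ predT _ _ _ (fun u _ => leqif_eq (le2 u))).2.
by move=> /forall_inP/(_ t isT)/eqP.
Qed.

Lemma two_neq0 : (2 : F) != 0.
Proof.
by apply: contraNneq (nonsquareN1 1) => two0; rewrite expr1n -addr_eq0 -mulr2n two0.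
Qed.

Lemma four_neq0 : (4 : F) != 0.
Proof. by rewrite (_ : 4 = 2 * 2) ?mulf_neq0 ?two_neq0 // -natrM. Qed.

End SquareRoots.

Section AdditiveCharacter.
Variables (F : finFieldType) (psi : F -> algC).
Hypotheses (psiD : {morph psi : x y / x + y >-> x * y}) (psi0 : psi 0 = 1).
Hypothesis psi_nontrivial : exists c, psi c != 1.
Local Notation q := #|F|.

Lemma psi_sum I (r : seq I) (P : pred I) (f : I -> F) :
  psi (\sum_(i <- r | P i) f i) = \prod_(i <- r | P i) psi (f i).
Proof. exact: (big_morph psi psiD psi0). Qed.

Lemma sum_psi_mul (l : F) : \sum_y psi (l * y) = (l == 0)%:R * q%:R.
Proof.
have [->|l_neq0] := eqVneq l 0.
  by under eq_bigr do rewrite mul0r psi0; rewrite sumr_const mul1r.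
have [c psic] := psi_nontrivial; rewrite mul0r.
set S := \sum_y _; have S_psicS : S = psi c * S.
  rewrite {1}/S (reindex_inj (addIr (c / l))) /= mulr_sumr.
  by apply: eq_bigr => y _; rewrite mulrDr mulrCA divff // mulr1 psiD mulrC.
apply/eqP; move/eqP: S_psicS; rewrite -subr_eq0 -{1}[S]mul1r -mulrBl mulf_eq0.
by rewrite subr_eq0 eq_sym (negPf psic).
Qed.

Lemma sum_psi_inv (a n : F) : a != 0 ->
  \sum_(r | r != 0) psi (n / (a * r)) = (n == 0)%:R * q%:R - 1.
Proof.
move=> a_neq0; pose h r := (a * r)^-1.
have h_inj : injective h by move=> r s /invr_inj/(mulfI a_neq0).
rewrite (eq_bigl (fun r => h r != 0)) => [|r]; last first.
  by rewrite invr_eq0 mulf_eq0 (negPf a_neq0).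
rewrite -(@reindex_inj _ _ _ _ h (fun u => u != 0) (fun u => psi (n * u)) h_inj) /=.
by rewrite -sum_psi_mul [in RHS](bigD1 0) //= mulr0 psi0 [1 + _]addrC addrK.
Qed.

Definition gauss (r : F) := \sum_y psi (r * y ^+ 2).

Section GaussSums.
Hypothesis nonsquareN1 : forall i : F, i ^+ 2 != -1.

Lemma gauss_addN r : r != 0 -> gauss r + gauss (- r) = 0.
Proof.
move=> r_neq0; have -> : gauss (- r) = \sum_y psi (r * - y ^+ 2).
  by apply: eq_bigr => y _; rewrite mulrN mulNr.
rewrite /gauss (sum_fibres (fun y => y ^+ 2) (fun t => psi (r * t))).
rewrite (sum_fibres (fun y => - y ^+ 2) (fun t => psi (r * t))) -big_split /=.
rewrite (eq_bigr (fun t => psi (r * t) *+ 2)) => [|t _]; last first.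
  rewrite -mulrnDr; congr (_ *+ _); rewrite -[RHS](nsqrtN_add nonsquareN1 t).
  by congr (_ + _)%N; apply: eq_card => y; rewrite !inE eqr_oppLR.
by rewrite sumrMnl sum_psi_mul (negPf r_neq0) mul0r mul0rn.
Qed.

(* Substituting [y + x] for [y] turns [r x^2 - r y^2] into a term linear in [x]. *)
Lemma gauss_mulN r : r != 0 -> gauss r * gauss (- r) = q%:R.
Proof.
move=> r_neq0; rewrite /gauss mulr_suml.
rewrite (eq_bigr (fun x => \sum_y psi (- r * y ^+ 2) * psi (- (r * y * 2) * x)));
  last first.
  move=> x _; rewrite mulr_sumr (reindex_inj (addIr x)) /=; apply: eq_bigr => y _.
  by rewrite -!psiD; congr psi; ring.
rewrite exchange_big /=; under eq_bigr do rewrite -mulr_sumr sum_psi_mul.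
rewrite (bigD1 0) //= big1 ?addr0 => [|y y_neq0].
  by rewrite !(mulr0, mul0r, oppr0, eqxx) expr0n mulr0 psi0 !mul1r.
rewrite oppr_eq0 !mulf_eq0 (negPf r_neq0) (negPf y_neq0).
by rewrite (negPf (two_neq0 nonsquareN1)) mul0r mulr0.
Qed.

Lemma gauss_sqr r : r != 0 -> gauss r ^+ 2 = - q%:R.
Proof.
move=> r_neq0; have := gauss_mulN r_neq0.
have -> : gauss (- r) = - gauss r by apply/eqP; rewrite -addr_eq0 addrC gauss_addN.
by rewrite mulrN expr2 => <-; rewrite opprK.
Qed.

Lemma sum_psi_quadratic r b : r != 0 ->
  \sum_y psi (r * y ^+ 2 + y * b) = psi (- b ^+ 2 / (4 * r)) * gauss r.
Proof.
move=> r_neq0; rewrite /gauss mulr_sumr (reindex_inj (addIr (- (b / (2 * r))))) /=.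
apply: eq_bigr => y _; rewrite -psiD; congr psi.
by field; rewrite r_neq0 (two_neq0 nonsquareN1) (four_neq0 nonsquareN1).
Qed.

Definition cone_transform d (x : 'rV[F]_d) := \sum_(s | sqnorm s == 0) psi (dot s x).

(* Detect [||s|| = 0] by summing [psi (r * ||s||)] over [r]: the term [r = 0]
   gives the Dirac mass at 0, the others factor over the coordinates. *)
Lemma cone_transform_gauss d (x : 'rV[F]_d) :
  q%:R * cone_transform x = q%:R ^+ d * (x == 0)%:R
    + \sum_(r | r != 0) gauss r ^+ d * psi (- sqnorm x / (4 * r)).
Proof.
rewrite /cone_transform big_mkcond mulr_sumr /=.
rewrite (eq_bigr (fun s => \sum_r psi (r * sqnorm s + dot s x))) => [|s _]; last first.
  under eq_bigr => r _ do rewrite psiD (mulrC r).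
  rewrite -mulr_suml sum_psi_mul.
  by case: eqP => _; rewrite ?mul1r ?mul0r ?mulr0 // mulrC.
rewrite exchange_big /= (bigD1 0) //=; congr (_ + _).
  under eq_bigr do rewrite mul0r add0r /dot psi_sum.
  rewrite (sum_row_prod (fun i y => psi (y * x 0 i))).
  under eq_bigr => i _ do under eq_bigr => y _ do rewrite mulrC.
  under eq_bigr do rewrite sum_psi_mul.
  by rewrite big_split /= prodr_const card_ord prod_row_eq0 mulrC.
apply: eq_bigr => r r_neq0.
under eq_bigr do rewrite /sqnorm /dot mulr_sumr -big_split psi_sum /=.
rewrite (sum_row_prod (fun i y => psi (r * y ^+ 2 + y * x 0 i))).
under eq_bigr do rewrite sum_psi_quadratic //.
rewrite big_split /= prodr_const card_ord mulrC -psi_sum; congr (_ * psi _).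
by rewrite -sumrN mulr_suml.
Qed.

Lemma cone_transform_val d m (x : 'rV[F]_d) : d = m.*2 -> odd m ->
  q%:R * cone_transform x =
  q%:R ^+ d * (x == 0)%:R - q%:R ^+ m * ((sqnorm x == 0)%:R * q%:R - 1).
Proof.
move=> dE m_odd; rewrite cone_transform_gauss.
rewrite (eq_bigr (fun r => - q%:R ^+ m * psi (- sqnorm x / (4 * r)))) => [|r r_neq0].
  by rewrite -mulr_sumr sum_psi_inv ?(four_neq0 nonsquareN1) // oppr_eq0 mulNr.
congr (_ * _); rewrite dE -mul2n exprM gauss_sqr //.
by rewrite exprNn -signr_odd m_odd expr1 mulN1r.
Qed.

Hypothesis psiN : forall x, psi (- x) = (psi x)^*.

Lemma sum_cone_transform_ge0 d (A : {set 'rV[F]_d}) :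
  0 <= \sum_(a in A) \sum_(b in A) cone_transform (a - b).
Proof.
have -> : \sum_(a in A) \sum_(b in A) cone_transform (a - b) =
    \sum_(s | sqnorm s == 0)
      (\sum_(a in A) psi (dot s a)) * (\sum_(b in A) psi (dot s b))^*.
  rewrite /cone_transform; under eq_bigr do rewrite exchange_big /=.
  rewrite exchange_big /=; apply: eq_bigr => s _.
  rewrite rmorph_sum mulr_suml; apply: eq_bigr => a _.
  by rewrite mulr_sumr; apply: eq_bigr => b _; rewrite dotBr psiD psiN.
by apply: sumr_ge0 => s _; exact: mul_conjC_ge0.
Qed.

Lemma Niso_bound d m (A : {set 'rV[F]_d}) : d = m.*2 -> odd m ->
  (q * Niso A <= q ^ m * #|A| + #|A| ^ 2)%N.
Proof.
move=> dE m_odd.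
have q_gt0 : 0 < q%:R :> algC by rewrite ltr0n; apply/card_gt0P; exists 0.
have sum_diag : \sum_(a in A) \sum_(b in A) ((a - b == 0)%:R : algC) = #|A|%:R.
  rewrite (eq_bigr (fun _ => 1)) ?sumr_const // => a a_in_A.
  rewrite (bigD1 a) //= subrr eqxx big1 ?addr0 // => b /andP[_ b_neq_a].
  by rewrite subr_eq0 eq_sym (negPf b_neq_a).
have key : q%:R * \sum_(a in A) \sum_(b in A) cone_transform (a - b) =
    q%:R ^+ m * (q%:R ^+ m * #|A|%:R + #|A|%:R ^+ 2 - q%:R * (Niso A)%:R) :> algC.
  rewrite mulr_sumr; under eq_bigr do rewrite mulr_sumr.
  under eq_bigr do under eq_bigr do rewrite (cone_transform_val _ dE m_odd).
  under eq_bigr do rewrite sumrB -!mulr_sumr sumrB -mulr_suml sumr_const.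
  rewrite sumrB -!mulr_sumr sum_diag sumrB -mulr_suml -Niso_sum sumr_const.
  have -> : q%:R ^+ d = q%:R ^+ m * q%:R ^+ m :> algC by rewrite dE -addnn exprD.
  by rewrite -mulr_natr -expr2; ring.
have := sum_cone_transform_ge0 A.
rewrite -(pmulr_rge0 _ q_gt0) key pmulr_rge0 ?exprn_gt0 // subr_ge0.
by rewrite -!natrX -!natrM -natrD ler_nat.
Qed.

End GaussSums.
End AdditiveCharacter.

Theorem lemma2p2 :
  exists C : rat, forall (F : finFieldType) (k : nat),
    (0 < k)%N -> (#|F| %% 4 = 3)%N ->
    forall A : {set 'rV[F]_(4 * k + 2)},
      (Niso A)%:R <= C * ((#|A| ^ 2)%:R / (#|F|)%:R + (#|F| ^ (2 * k) * #|A|)%:R).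
Proof.
exists 1 => F k _ q3 A; rewrite mul1r.
have [psi [psiD psi0 psiN psi_nontrivial]] := exists_add_char F.
have dE : (4 * k + 2 = (2 * k).+1.*2)%N by rewrite doubleS -mul2n mulnA addn2.
have m_odd : odd (2 * k).+1 by rewrite /= oddM.
have := Niso_bound psiD psi0 psi_nontrivial (nonsquareN1_card_mod4 q3) psiN A
  dE m_odd.
have q_gt0 : 0 < #|F|%:R :> rat by rewrite ltr0n; apply/card_gt0P; exists 0.
rewrite -(ler_pM2l q_gt0) mulrDr mulrCA divff ?lt0r_neq0 // mulr1.
by rewrite -!natrM -natrD ler_nat (mulnA #|F|) -expnS (addnC (#|A| ^ 2)%N).
Qed.
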